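(* Let $M$ be a prefix matching of $\Gamma$ and suppose $\Gamma^M$ contains a directed cycle $a_1\to b_1\to a_2\to b_2\to\cdots\to a_p\to b_p\to a_{p+1}=a_1$ with all $a_i\in I_{k,l}(G)$ and $b_i\in I_{k-1,l}(G)$, where each $a_i\to b_i$ is an edge of $\Gamma$ not in $M$ and each $b_i\to a_{i+1}$ is a reversed edge of $M$. Let $d_i$ be the index such that $b_i$ is obtained from $a_i$ by deleting the entry at position $d_i$, and let $(c_i,u_i)$ be such that $a_{i+1}$ is obtained from $b_i=(b_{i,0},\dots,b_{i,k-1})$ by inserting $u_i$ between positions $c_i$ and $c_i+1$, i.e. $a_{i+1}=(b_{i,0},\dots,b_{i,c_i},u_i,b_{i,c_i+1},\dots,b_{i,k-1})$. Taking all indices modulo $p$, we have for all $i$: $d_{i+1}\neq c_i+1$, $d_{i+1}\le c_i+2$, and $d_i\le c_i+1$.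
   Context: $G$ is a finite simple connected graph with shortest-path distance $d$; $\ell(x_0,\dots,x_k)=\sum_{i=0}^{k-1}d(x_i,x_{i+1})$. A sequence is an element of $I_{k,l}(G)=\{(x_0,\dots,x_k)\in V(G)^{k+1}:x_i\ne x_{i+1}\ \forall i,\ \ell(x_0,\dots,x_k)=l\}$. $\Gamma$ is the directed graph on all sequences with an edge $a\to b$ whenever $a=(x_0,\dots,x_k)$, $b=(x_0,\dots,\hat x_i,\dots,x_k)$ for some $1\le i\le k-1$ and $\ell(b)=\ell(a)$. A matching is a set of pairwise vertex-disjoint edges of $\Gamma$; $\Gamma^M$ denotes $\Gamma$ with the edges of $M$ reversed. The matching state of a sequence $(x_0,\dots,x_k)$ is ''unmatched'', ''insert$(i,v)$'' (matched to $(x_0,\dots,x_i,v,x_{i+1},\dots,x_k)$) or ''delete$(i)$'' (matched to $(x_0,\dots,\hat x_i,\dots,x_k)$). A prefix matching is a matching such that whenever $(x_0,\dots,x_k)$ has state insert$(i,v)$ (resp. delete$(i)$), every sequence of the form $(x_0,\dots,x_{i+1},y_{i+2},\dots,y_{k'})$ has the same state. *)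

From mathcomp Require Import all_boot.
Set Implicit Arguments. Unset Strict Implicit. Unset Printing Implicit Defensive.

Section Defs.
Variables (T : finType) (e : rel T).

Fixpoint within (n : nat) (x y : T) : bool :=
  if n is n'.+1 then within n' x y || [exists z, within n' x z && e z y]
  else x == y.

(* shortest-path distance: least n <= #|T| with within n x y
   (for a connected graph this is always attained below #|T|) *)
Definition dist (x y : T) : nat := find (fun n => within n x y) (iota 0 #|T|).

Definition ell (s : seq T) : nat :=
  if s is x :: s' then sumn (pairmap dist x s') else 0.

Definition isSeq (s : seq T) : bool :=
  if s is x :: s' then path (fun a b => a != b) x s' else false.

Definition inI (k l : nat) (s : seq T) : bool :=
  [&& size s == k.+1, isSeq s & ell s == l].

Definition rem_at (i : nat) (s : seq T) : seq T := take i s ++ drop i.+1 s.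

(* (x_0,..,x_i,v,x_{i+1},..,x_k) *)
Definition ins_at (i : nat) (v : T) (s : seq T) : seq T :=
  take i.+1 s ++ v :: drop i.+1 s.

Definition Gamma (a b : seq T) : Prop :=
  isSeq a /\ isSeq b /\
  exists i, 1 <= i /\ i.+1 < size a /\ b = rem_at i a /\ ell b = ell a.

Definition matching (M : seq T -> seq T -> Prop) : Prop :=
  (forall a b, M a b -> Gamma a b) /\
  (forall a b a' b', M a b -> M a' b' -> (a, b) <> (a', b') ->
     [/\ a <> a', a <> b', b <> a' & b <> b']).

(* state insert(i,v) of x : x matched to ins_at i v x;
   state delete(i) of x : x matched to rem_at i x *)
Definition prefix_matching (M : seq T -> seq T -> Prop) : Prop :=
  matching M /\
  (forall x i v, isSeq x -> M (ins_at i v x) x ->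
     forall y, isSeq y -> take i.+2 y = take i.+2 x -> M (ins_at i v y) y) /\
  (forall x i, isSeq x -> M x (rem_at i x) ->
     forall y, isSeq y -> take i.+2 y = take i.+2 x -> M y (rem_at i y)).

End Defs.

(* The cycle alternates unmatched deletions a_i -> b_i with matched insertions
   b_i -> a_(i+1), and a_(i+1) = ins_at c_i u_i b_i is matched back by deleting
   position c_i + 1.  Each inequality is proved by contradiction: if it fails,
   either b_(i+1) = b_i (so the edge a_(i+1) -> b_(i+1) would lie in M), or the
   deleted position lies beyond the prefix that fixes a matching state, so the
   prefix property transports that state to b_(i+1) (resp. a_i).  That sequence
   is then the source of an edge of M and, being already the target of one in
   the cycle, would be covered twice. *)

From mathcomp Require Import all_boot.

Set Implicit Arguments.
Unset Strict Implicit.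
Unset Printing Implicit Defensive.

Section SeqSurgery.
Variable T : finType.
Implicit Types (s : seq T) (v : T).

Lemma rem_at_oversize d s : size s <= d -> rem_at d s = s.
Proof.
by move=> hd; rewrite /rem_at take_oversize // drop_oversize ?cats0 // leqW.
Qed.

Lemma size_rem_at d s : d < size s -> size (rem_at d s) = (size s).-1.
Proof.
move=> hd; rewrite /rem_at size_cat size_takel ?(ltnW hd) // size_drop.
by case: (size s) hd => // n hd; rewrite subSS subnKC.
Qed.

Lemma take_rem_at n d s : n <= d -> take n (rem_at d s) = take n s.
Proof.
move=> hn; case: (ltnP d (size s)) => hd; last by rewrite rem_at_oversize.
by rewrite /rem_at takel_cat ?take_takel // size_takel // ltnW.
Qed.

Lemma rem_at_ins_at c v s : c < size s -> rem_at c.+1 (ins_at c v s) = s.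
Proof.
move=> hc; have hs : size (take c.+1 s) = c.+1 by rewrite size_takel.
rewrite /rem_at /ins_at takel_cat ?hs // take_takel //.
by rewrite drop_cat hs ltnNge leqnSn subSnn /= drop0 cat_take_drop.
Qed.

End SeqSurgery.

Section PrefixMatching.
Variables (T : finType) (e : rel T) (M : seq T -> seq T -> Prop).

Lemma Gamma_neq a b : Gamma e a b -> a <> b.
Proof.
case=> _ [_ [i [_ [hi [-> _]]]]] /(congr1 size).
rewrite size_rem_at ?(ltn_trans _ hi) // -(ltn_predK hi) /=.
by move=> /eqP; rewrite eqn_leq ltnn.
Qed.

Lemma matched_target_not_source x y z : matching e M -> M x y -> ~ M y z.
Proof.
case=> hG hdisj hxy hyz.
by have [_ _ + _] := hdisj _ _ _ _ hxy hyz (fun E => Gamma_neq (hG _ _ hxy) (congr1 fst E)).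
Qed.

Hypothesis HM : prefix_matching e M.

Lemma prefix_matching_delete_rem_at a c d :
    isSeq a -> isSeq (rem_at d a) -> c.+2 <= d ->
  M a (rem_at c a) -> M (rem_at d a) (rem_at c (rem_at d a)).
Proof.
case: HM => _ [_ hdel] ha hb hcd hM.
exact: hdel _ _ ha hM _ hb (take_rem_at _ hcd).
Qed.

Lemma prefix_matching_insert_rem_at a c d v :
    isSeq a -> isSeq (rem_at d a) -> c.+2 <= d ->
  M (ins_at c v (rem_at d a)) (rem_at d a) -> M (ins_at c v a) a.
Proof.
case: HM => _ [hins _] ha hb hcd hM.
by apply: hins _ _ _ hb hM _ ha _; rewrite take_rem_at.
Qed.

End PrefixMatching.

Theorem lemma3p3 (T : finType) (e : rel T)
  (e_sym : symmetric e) (e_irr : irreflexive e)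
  (e_conn : forall x y : T, connect e x y)
  (M : seq T -> seq T -> Prop) (HM : prefix_matching e M)
  (k l p : nat) (hk : 0 < k) (hp : 0 < p)
  (a b : nat -> seq T) (c d : nat -> nat) (u : nat -> T)
  (ha : forall i, i < p -> inI e k l (a i))
  (hb : forall i, i < p -> inI e k.-1 l (b i))
  (hab : forall i, i < p -> Gamma e (a i) (b i) /\ ~ M (a i) (b i))
  (hd : forall i, i < p -> b i = rem_at (d i) (a i))
  (hba : forall i, i < p -> M (a (i.+1 %% p)) (b i))
  (hc : forall i, i < p -> a (i.+1 %% p) = ins_at (c i) (u i) (b i)) :
  forall i, i < p ->
    [/\ d (i.+1 %% p) != (c i).+1, d (i.+1 %% p) <= (c i).+2 & d i <= (c i).+1].
Proof.
have HMm : matching e M by case: HM.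
have seqa j : j < p -> isSeq (a j) by move=> /ha /and3P [].
have seqb j : j < p -> isSeq (b j) by move=> /hb /and3P [].
have size_a j : j < p -> size (a j) = k.+1 by move=> /ha /and3P [/eqP].
have size_b j : j < p -> size (b j) = k by move=> /hb /and3P [/eqP ->]; rewrite prednK.
have d_le j : j < p -> d j <= k.
  move=> jp; rewrite -ltnS -(size_a j jp) ltnNge; apply/negP => hdj.
  have [/Gamma_neq + _] := hab j jp; apply.
  by rewrite hd // rem_at_oversize.
move=> i ip; set j := i.+1 %% p.
have jp : j < p by rewrite ltn_mod.
have hcj : a j = ins_at (c i) (u i) (b i) := hc i ip.
split.
- apply/negP => /eqP dj.
  have [_ []] := hab j jp; rewrite hd // dj {2}hcj rem_at_ins_at; first exact: hba.
  by rewrite size_b // -ltnS -dj ltnS d_le.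
- rewrite leqNgt; apply/negP => hcd.
  have cb : c i < size (b i).
    by rewrite size_b // (leq_trans (ltn_trans (leqnSn _) hcd) (d_le j jp)).
  have Mdel : M (a j) (rem_at (c i).+1 (a j)) by rewrite {2}hcj rem_at_ins_at //; apply: hba.
  have := prefix_matching_delete_rem_at HM (seqa j jp) _ hcd Mdel.
  rewrite -hd // => /(_ (seqb j jp)).
  exact: matched_target_not_source HMm (hba j jp).
- rewrite leqNgt; apply/negP => hcd.
  pose i' := (i + p.-1) %% p.
  have i'p : i' < p by rewrite ltn_mod.
  have i'i : i'.+1 %% p = i by rewrite -addn1 modnDml addn1 -addnS prednK // modnDr modn_small.
  have Mins : M (ins_at (c i) (u i) (rem_at (d i) (a i))) (rem_at (d i) (a i)).
    by rewrite -hd // -hcj; apply: hba.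
  have := prefix_matching_insert_rem_at HM (seqa i ip) _ hcd Mins.
  rewrite -hd // => /(_ (seqb i ip)).
  have := hba i' i'p; rewrite i'i => prev Mai.
  exact: matched_target_not_source HMm Mai prev.
Qed.
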